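(* Let $D$ be a finite index set and, for each $H\in D$, let $T_H(\mathbf{X})=\sum_{i=1}^{M_H}\theta_{H,i}\,\varphi_i^H(\mathbf{X})$ for $\mathbf{X}\in\mathbb{R}^D$, where each $\varphi_i^H(\mathbf{X})$ is a product of finitely many constants from $[0,1]$ and finitely many components $X_C$ ($C\in D$) of $\mathbf{X}$, and where (generative exclusiveness condition) for each $H$ the numbers $\theta_{H,1},\dots,\theta_{H,M_H}$ are the probabilities of pairwise distinct values $v_1,\dots,v_{M_H}$ of a single discrete random variable (so $\theta_{H,i}\ge 0$ and $\sum_{i=1}^{M_H}\theta_{H,i}\le 1$). Let $T=(T_H)_{H\in D}$, and define $\mathbf{X}_0=\mathbf{0}$ and $\mathbf{X}_{k+1}=T(\mathbf{X}_k)$ for $k\ge 0$. Then $\mathbf{X}_k\le\mathbf{1}$ for every $k\ge 0$.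
   Context: Vectors are compared componentwise; $\mathbf{0}$ and $\mathbf{1}$ denote the all-zero and all-one vectors in $\mathbb{R}^D$. The system $\mathbf{X}=T(\mathbf{X})$ is the set of probability equations derived from an explanation graph: $X_H$ is the unknown probability of a goal $H$, and the disjuncts of the defining formula of $H$ are each selected by a distinct outcome $v_i$ of one probabilistic switch with probability $\theta_{H,i}$. *)

From mathcomp Require Import all_boot all_order all_algebra.
Set Implicit Arguments. Unset Strict Implicit. Unset Printing Implicit Defensive.
Import Order.TTheory GRing.Theory Num.Theory.
Local Open Scope ring_scope.

Record monomial (R : Type) (D : Type) := Monomial {
  mconsts : seq R;
  mvars : seq D     (* the indices C of the factors X_C (repetition allowed) *)
}.

Definition meval (R : realFieldType) (D : finType) (m : monomial R D)
  (X : D -> R) : R :=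
  (\prod_(c <- mconsts m) c) * \prod_(C <- mvars m) X C.

Definition Tmap (R : realFieldType) (D : finType) (M : D -> nat)
  (theta : forall H : D, 'I_(M H) -> R)
  (phi : forall H : D, 'I_(M H) -> monomial R D)
  (X : D -> R) : D -> R :=
  fun H => \sum_(i < M H) theta H i * meval (phi H i) X.

Definition Xseq (R : realFieldType) (D : finType) (M : D -> nat)
  (theta : forall H : D, 'I_(M H) -> R)
  (phi : forall H : D, 'I_(M H) -> monomial R D) (k : nat) : D -> R :=
  iter k (Tmap theta phi) (fun _ => 0).

From mathcomp Require Import all_boot all_order all_algebra.
Import Order.TTheory GRing.Theory Num.Theory.
Local Open Scope ring_scope.

(* The unit cube [0,1]^D is invariant under T: each monomial maps it into
   [0,1], and T_H is then a sub-convex combination of values in [0,1]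
   because the theta_{H,i} are nonnegative with sum at most 1.  Since
   X_0 = 0 lies in the cube, so does every iterate. *)

Section UnitInterval.

Variable R : realFieldType.

Definition unit_interval (x : R) : bool := (0 <= x) && (x <= 1).

Lemma unit_interval_prod (T : eqType) (s : seq T) (f : T -> R) :
  {in s, forall x, unit_interval (f x)} ->
  unit_interval (\prod_(x <- s) f x).
Proof.
elim: s => [|a s IH] f01; first by rewrite big_nil /unit_interval ler01 lexx.
have /andP[a0 a1] := f01 a (mem_head a s).
have /andP[p0 p1] : unit_interval (\prod_(x <- s) f x).
  by apply: IH => x xs; apply: f01; rewrite inE xs orbT.
by rewrite big_cons /unit_interval mulr_ge0 //= mulr_ile1.
Qed.

Lemma unit_interval_subconvex (I : finType) (w f : I -> R) :
  (forall i, 0 <= w i) -> \sum_i w i <= 1 ->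
  (forall i, unit_interval (f i)) ->
  unit_interval (\sum_i w i * f i).
Proof.
move=> w_ge0 w_sum f01; apply/andP; split.
  by apply: sumr_ge0 => i _; case/andP: (f01 i) => f0 _; rewrite mulr_ge0.
apply: le_trans w_sum; apply: ler_sum => i _.
case/andP: (f01 i) => _ f1.
by rewrite -{2}(mulr1 (w i)) ler_wpM2l.
Qed.

End UnitInterval.

Arguments unit_interval {R}.
Arguments unit_interval_prod {R T}.
Arguments unit_interval_subconvex {R I}.

Lemma unit_interval_meval (R : realFieldType) (D : finType)
    (m : monomial R D) (X : D -> R) :
  all unit_interval (mconsts m) -> (forall C, unit_interval (X C)) ->
  unit_interval (meval m X).
Proof.
move=> /allP c01 X01.
have /andP[c0 c1] : unit_interval (\prod_(c <- mconsts m) c).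
  exact: unit_interval_prod.
have /andP[v0 v1] : unit_interval (\prod_(C <- mvars m) X C).
  by apply: unit_interval_prod => C _.
by rewrite /meval /unit_interval mulr_ge0 //= mulr_ile1.
Qed.

Lemma Tmap_unit_cube (R : realFieldType) (D : finType) (M : D -> nat)
    (theta : forall H : D, 'I_(M H) -> R)
    (phi : forall H : D, 'I_(M H) -> monomial R D) (X : D -> R) :
  (forall H i, 0 <= theta H i) -> (forall H, \sum_(i < M H) theta H i <= 1) ->
  (forall H i, all unit_interval (mconsts (phi H i))) ->
  (forall C, unit_interval (X C)) ->
  forall H, unit_interval (Tmap theta phi X H).
Proof.
move=> theta_ge0 theta_sum consts01 X01 H.
apply: unit_interval_subconvex => // i.
exact: unit_interval_meval.
Qed.

Theorem lemma2 (R : realFieldType) (D : finType) (M : D -> nat)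
  (theta : forall H : D, 'I_(M H) -> R)
  (phi : forall H : D, 'I_(M H) -> monomial R D)
  (theta_ge0 : forall (H : D) (i : 'I_(M H)), 0 <= theta H i)
  (theta_sum : forall H : D, \sum_(i < M H) theta H i <= 1)
  (consts01 : forall (H : D) (i : 'I_(M H)),
      all (fun c => (0 <= c) && (c <= 1)) (mconsts (phi H i))) :
  forall (k : nat) (H : D), Xseq theta phi k H <= 1.
Proof.
have Xseq01 k : forall H, unit_interval (Xseq theta phi k H).
  elim: k => [|k IH] H; first by rewrite /unit_interval lexx ler01.
  exact: (@Tmap_unit_cube _ _ _ theta phi (Xseq theta phi k)
            theta_ge0 theta_sum consts01 IH H).
by move=> k H; case/andP: (Xseq01 k H).
Qed.
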